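(* Let $G$ be a group and $\mathcal{P}$ a poset, under inclusion, of subgroups of $G$ such that $1\in\mathcal{P}$ and the inclusions $\{U\hookrightarrow G\}_{U\in\mathcal{P}}$ form a colimit cone, i.e. $G\cong\operatorname{colim}_{U\in\mathcal{P}}U$. Let $H\colon\mathcal{P}\to\mathrm{Ab}$ be the functor with $H(U)=\{\sum_{g\in G}n_g g\in\mathbb{Z}[G]\mid \sum_{u\in U}n_{ug}=0\text{ for all }g\in G\}$ and sending inclusions of subgroups to inclusions. Let $U\in\mathcal{P}$ and suppose that for every finite subset $J\subset\mathcal{P}_{\le U}$, setting $M=\max J$, the subgroup $\langle V\mid V\in M\rangle$ is the free product of the subgroups $\{V\}_{V\in M}$ with amalgamated subgroup $\bigcap_{V\in M}V$, and $\bigcap_{V\in M}V\in\mathcal{P}$. Then $H$ is pseudo-projective at $U$.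
   Context: $\mathcal{P}_{\le U}=\{V\in\mathcal{P}:V\le U\}$; $\max J$ is the set of maximal elements of $J$. For $V\le W$ in $\mathcal{P}$, $H(V<W)$ is the inclusion $H(V)\subseteq H(W)$, and $\operatorname{Im}_H(V)=\sum_{W<V}\operatorname{Im}H(W<V)$. $H$ is pseudo-projective at $U$ if for every finite $J\subset\mathcal{P}_{\le U}$ and every $\oplus_{V\in J}x_V\in\bigoplus_{V\in J}H(V)$ with $\sum_{V\in J}H(V<U)(x_V)=0$, one has $x_V\in\operatorname{Im}_H(V)$ for all $V\in\max J$. *)

From HB Require Import structures.
From mathcomp Require Import ssreflect ssrfun ssrbool eqtype ssrnat seq choice.
From mathcomp Require Import fintype bigop monoid ssralg ssrint.
From mathcomp Require Import boolp classical_sets functions cardinality fsbigop.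

Set Implicit Arguments.
Unset Strict Implicit.
Unset Printing Implicit Defensive.

Local Open Scope classical_set_scope.

Section Defs.
Variable G : groupType.

Definition is_subgroup (U : set G) : Prop :=
  U 1%g /\ (forall x y, U x -> U y -> U (x * y^-1)%g).

Definition gen_subgroup (S : set G) : set G :=
  [set x | forall K : set G, is_subgroup K -> S `<=` K -> K x].

Definition hom_on (X : groupType) (U : set G) (f : G -> X) : Prop :=
  forall a b, U a -> U b -> f (a * b)%g = (f a * f b)%g.

Definition colimit_cone (P : set (set G)) : Prop :=
  forall (X : groupType) (f : set G -> G -> X),
    (forall U, P U -> hom_on U (f U)) ->
    (forall V W, P V -> P W -> V `<=` W -> forall v, V v -> f W v = f V v) ->
    exists! F : G -> X, hom_on setT F /\
      (forall U, P U -> forall u, U u -> F u = f U u).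

(* K (with the inclusions V -> K, V in M) is the free product of the
   subgroups V in M with amalgamated subgroup A (A contained in each V):
   the universal property of the colimit of the diagram {A -> V}_{V in M}. *)
Definition is_amalgamated_product (K : set G) (M : set (set G)) (A : set G) : Prop :=
  forall (X : groupType) (f : set G -> G -> X),
    (forall V, M V -> hom_on V (f V)) ->
    (forall V W a, M V -> M W -> A a -> f V a = f W a) ->
    exists F : G -> X, hom_on K F /\
      (forall V, M V -> forall v, V v -> F v = f V v) /\
      (forall F' : G -> X, hom_on K F' ->
         (forall V, M V -> forall v, V v -> F' v = f V v) ->
         forall k, K k -> F' k = F k).

Definition below (P : set (set G)) (U : set G) : set (set G) :=
  [set V | P V /\ V `<=` U].

Definition maximals (J : set (set G)) : set (set G) :=
  [set V | J V /\ (forall W, J W -> V `<=` W -> W = V)].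

(* Elements of Z[G] are finitely supported functions G -> int (g |-> n_g). *)
Definition ZG : set (G -> int) := [set x | finite_set [set g | x g != 0%R]].

Definition Hmod (U : set G) : set (G -> int) :=
  [set x | ZG x /\ forall g, (\sum_(u \in U) x (u * g)%g)%R = 0%R].

(* Im_H(V) = sum_{W < V, W in P} Im H(W < V)  (H(W < V) is the inclusion);
   the sum of subgroups is the set of finite sums of their elements. *)
Definition ImH (P : set (set G)) (V : set G) : set (G -> int) :=
  [set y | exists (n : nat) (W : 'I_n -> set G) (z : 'I_n -> G -> int),
     (forall k, P (W k) /\ W k `<` V /\ Hmod (W k) (z k)) /\
     (forall g, y g = (\sum_(k < n) z k g)%R)].

Definition pseudo_projective (P : set (set G)) (U : set G) : Prop :=
  forall (J : set (set G)) (x : set G -> G -> int),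
    finite_set J -> J `<=` below P U ->
    (forall V, J V -> Hmod V (x V)) ->
    (forall g, (\sum_(V \in J) x V g)%R = 0%R) ->
    forall V, maximals J V -> ImH P V (x V).

End Defs.

(* Fix a maximal [V0] of [J] and let [A] be the intersection of the maximal
   elements of [J].  Then [x V0 = y - \sum_(W in J, W < V0) x W] with
   [y := \sum_(W in J, W <= V0) x W], so it suffices to show that [y] lies in
   [H(A)] (if [A = V0] then every [W] in [J] lies below [V0] and [y = 0]).
   Mapping each maximal [V] to [int^G ⋊ G] by [v |-> (c v, v)], where [c] is the
   coboundary of the indicator [1_A] on [V0] and trivial on the other maximal
   elements, the amalgamated product yields a potential [h : G -> int] that is
   left [V]-invariant for every maximal [V <> V0] and such that [h - 1_A] is left
   [V0]-invariant.  As an element of [H(W)] pairs to zero with every left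
   [W]-invariant function, [<y, 1_A> = \sum_(W in J) <x W, h> = <0, h> = 0], i.e.
   [y] sums to zero over [A]; translating [x] gives the same over each [A g]. *)

From HB Require Import structures.
From mathcomp Require Import ssreflect ssrfun ssrbool eqtype ssrnat seq choice.
From mathcomp Require Import fintype bigop monoid ssralg ssrint finmap.
From mathcomp Require Import boolp classical_sets functions cardinality fsbigop.
From mathcomp Require Import numfun.

Set Implicit Arguments.
Unset Strict Implicit.
Unset Printing Implicit Defensive.
Import GRing.Theory.
Local Open Scope classical_set_scope.

Section Subgroups.
Variable G : groupType.
Implicit Types (V : set G) (u x y : G).

Lemma subgroup1 V : is_subgroup V -> V 1%g.
Proof. by case. Qed.

Lemma subgroupV V x : is_subgroup V -> V x -> V x^-1%g.
Proof. by move=> [V1 VM] Vx; have := VM 1%g x V1 Vx; rewrite mul1g. Qed.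

Lemma subgroupM V x y : is_subgroup V -> V x -> V y -> V (x * y)%g.
Proof. by move=> sV Vx Vy; have := sV.2 x y^-1%g Vx (subgroupV sV Vy); rewrite invgK. Qed.

Lemma subgroupMl V u x : is_subgroup V -> V u -> V (u * x)%g = V x.
Proof.
move=> sV Vu; apply: propext; split; last exact: subgroupM.
by move=> /(subgroupM sV (subgroupV sV Vu)); rewrite mulKg.
Qed.

Lemma subgroup_gen_subgroup (S : set G) : is_subgroup (gen_subgroup S).
Proof.
split=> [K [] //|x y Sx Sy K sK SK].
by apply: sK.2; [apply: Sx | apply: Sy].
Qed.

Lemma sub_gen_subgroup (S : set G) : S `<=` gen_subgroup S.
Proof. by move=> x Sx K _; apply. Qed.

Lemma subgroup_bigcap (M : set (set G)) :
  (forall V, M V -> is_subgroup V) -> is_subgroup (\bigcap_(V in M) V).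
Proof.
move=> sM; split=> [V /sM/subgroup1 //|x y Ax Ay V MV].
by apply: (sM V MV).2; [apply: Ax | apply: Ay].
Qed.

End Subgroups.

Lemma exists_maximal_seq (T : choiceType) (s : seq (set T)) (W : set T) :
  W \in s ->
  exists2 V, V \in s & W `<=` V /\ forall V', V' \in s -> V `<=` V' -> V' = V.
Proof.
elim: s W => [//|a s IH] W; rewrite in_cons => /orP[/eqP-> {W} | Ws].
  have [[b bs ab] | above_a] := pselect (exists2 b, b \in s & a `<=` b).
    have [V Vs [bV Vmax]] := IH b bs.
    exists V; first by rewrite in_cons Vs orbT.
    split=> [|V']; first exact: subset_trans ab bV.
    rewrite in_cons => /orP[/eqP-> aV | /Vmax//].
    by apply/seteqP; split=> //; apply: subset_trans ab bV.
  exists a; first exact: mem_head.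
  split=> // V'; rewrite in_cons => /orP[/eqP-> // | V's aV'].
  by case: above_a; exists V'.
have [V Vs [WV Vmax]] := IH W Ws.
have [Va | Va] := pselect (V `<=` a).
  exists a; first exact: mem_head.
  split=> [|V']; first exact: subset_trans WV Va.
  rewrite in_cons => /orP[/eqP-> // | V's aV'].
  have eV' := Vmax V' V's (subset_trans Va aV').
  by apply/seteqP; split=> //; rewrite eV'.
exists V; first by rewrite in_cons Vs orbT.
by split=> // V'; rewrite in_cons => /orP[/eqP-> /Va // | /Vmax//].
Qed.

Lemma exists_maximal (G : groupType) (J : set (set G)) (W : set G) :
  finite_set J -> J W ->
  exists2 V, maximals J V & W `<=` V.
Proof.
move=> finJ JW; have memJ V : (V \in (fset_set J : seq _)) = (V \in J).
  by rewrite in_fset_set.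
have Ws : W \in (fset_set J : seq _) by rewrite memJ inE.
have [V + [WV Vmax]] := exists_maximal_seq Ws.
rewrite memJ inE => JV; exists V => //; split=> // V' JV'.
by apply: Vmax; rewrite memJ inE.
Qed.

(* The unrestricted wreath product [int^G ⋊ G]; a map [v |-> (c v, v)] into it
   is a homomorphism exactly when [c (a * b) z = c a (b * z) + c b z]. *)
Definition wreath (G : groupType) : Type := ((G -> int) * G)%type.
HB.instance Definition _ (G : groupType) := Choice.on (wreath G).

Section Wreath.
Variable G : groupType.
Local Open Scope ring_scope.

Definition wreath_mul (p q : wreath G) : wreath G :=
  (fun z => p.1 (q.2 * z)%g + q.1 z, (p.2 * q.2)%g).
Definition wreath_one : wreath G := (fun=> 0, 1%g).
Definition wreath_inv (p : wreath G) : wreath G :=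
  (fun z => - p.1 (p.2^-1 * z)%g, p.2^-1%g).

Lemma wreath_mulA : associative wreath_mul.
Proof.
move=> [f a] [g b] [k c]; congr pair; last exact: mulgA.
by apply: funext => z /=; rewrite mulgA addrA.
Qed.

Lemma wreath_mul1g : left_id wreath_one wreath_mul.
Proof. by move=> [f a]; congr pair; [apply: funext => z; rewrite add0r | rewrite mul1g]. Qed.

Lemma wreath_mulg1 : right_id wreath_one wreath_mul.
Proof. by move=> [f a]; congr pair; [apply: funext => z; rewrite mul1g addr0 | rewrite mulg1]. Qed.

Lemma wreath_mulVg : left_inverse wreath_one wreath_inv wreath_mul.
Proof. by move=> [f a]; congr pair; [apply: funext => z; rewrite /= mulKg addNr | exact: mulVg]. Qed.

Lemma wreath_mulgV : right_inverse wreath_one wreath_inv wreath_mul.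
Proof. by move=> [f a]; congr pair; [apply: funext => z; rewrite /= addrN | exact: mulgV]. Qed.

End Wreath.

HB.instance Definition _ (G : groupType) :=
  isGroup.Build (wreath G) (@wreath_mulA G) (@wreath_mul1g G) (@wreath_mulg1 G)
    (@wreath_mulVg G) (@wreath_mulgV G).

Lemma wreath_mulE (G : groupType) (p q : wreath G) : (p * q)%g = wreath_mul p q.
Proof. by []. Qed.

Lemma amalgamated_coboundary (G : groupType) (M : set (set G)) (A : set G)
    (c : set G -> G -> G -> int) :
  let K := gen_subgroup (\bigcup_(V in M) V) in
  is_amalgamated_product K M A ->
  (forall V a b z, M V -> V a -> V b -> c V (a * b)%g z = (c V a (b * z)%g + c V b z)%R) ->
  (forall V W a, M V -> M W -> A a -> c V a = c W a) ->
  exists h : G -> int, forall V v z, M V -> V v -> K z -> h (v * z)%g = (h z + c V v z)%R.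
Proof.
move=> K amal cocycle cA.
pose f V v : wreath G := (c V v, v).
have homf V : M V -> hom_on V (f V).
  move=> MV a b Va Vb; rewrite wreath_mulE /f; congr pair.
  by apply: funext => z; rewrite cocycle.
have fA V W a : M V -> M W -> A a -> f V a = f W a by move=> *; rewrite /f (cA V W).
have [F [homF [Ff _]]] := amal (wreath G) f homf fA.
have [F0 [_ [_ F0_uniq]]] := amal G (fun _ v => v) (fun _ _ _ _ _ _ => erefl)
  (fun _ _ _ _ _ _ => erefl).
have F2 k : K k -> (F k).2 = k.
  move=> Kk; rewrite (F0_uniq (fun k => (F k).2)) //; last first.
  - by move=> V MV v Vv; rewrite (Ff V).
  - by move=> a b Ka Kb; rewrite homF.
  by rewrite -(F0_uniq id).
have VK V : M V -> V `<=` K by move=> MV v Vv; apply: sub_gen_subgroup; exists V.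
exists (fun z => (F z).1 1%g) => V v z MV Vv Kz.
rewrite homF //; last exact: VK V MV v Vv.
by rewrite wreath_mulE /= F2 // mulg1 (Ff V) // addrC.
Qed.

Lemma fsbig_fibers (R : Type) (idx : R) (op : Monoid.com_law idx) (I J : choiceType)
    (T : set I) (f : I -> J) (F : I -> R) : finite_set T ->
  \big[op/idx]_(i \in T) F i =
  \big[op/idx]_(j \in f @` T) \big[op/idx]_(i \in T `&` f @^-1` [set j]) F i.
Proof.
move=> finT; under [RHS]eq_fsbigr do rewrite fsbig_mkcondr.
rewrite exchange_fsbig //; last exact: finite_image.
apply: eq_fsbigr => i /[!inE] Ti.
rewrite (fsbigD1 (f i)) //; last exact: finite_image.
rewrite mem_set // fsbig1 ?Monoid.mulm1 // => j [_ /= nji].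
by rewrite memNset // => /esym.
Qed.

Lemma fsumrN (T : choiceType) (R : zmodType) (S : set T) (F : T -> R) :
  (\sum_(i \in S) - F i = - \sum_(i \in S) F i)%R.
Proof.
have suppN : S `&` (fun i => - F i)%R @^-1` [set~ 0%R] = S `&` F @^-1` [set~ 0%R].
  apply/seteqP; split=> i [Si /= Fi]; split=> //= Fi0; apply: Fi.
    by rewrite Fi0 oppr0.
  by move/eqP: Fi0; rewrite oppr_eq0 => /eqP.
have [finS|infS] := pselect (finite_set (S `&` F @^-1` [set~ 0%R])).
  by rewrite [LHS]fsbig_supp [in RHS]fsbig_supp suppN !fsbig_finite // sumrN.
by rewrite !fsbig_dflt ?oppr0 // suppN.
Qed.

Section HmodTheory.
Variable G : groupType.
Implicit Types (V T : set G) (y psi : G -> int).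
Local Open Scope ring_scope.

Lemma Hmod_opp V y : Hmod V y -> Hmod V (fun z => - y z).
Proof.
move=> [finy Vy]; split=> [|g]; last by rewrite fsumrN Vy oppr0.
by apply: sub_finite_set finy => z /=; rewrite oppr_eq0.
Qed.

Lemma Hmod_translate V y g : Hmod V y -> Hmod V (fun z => y (z * g)%g).
Proof.
move=> [finy Vy]; split=> [|g'].
  apply: sub_finite_set (finite_image (fun z => z * g^-1)%g finy) => z /= yz.
  by exists (z * g)%g => //; rewrite mulgK.
by rewrite -[RHS](Vy (g' * g)%g); apply: eq_fsbigr => u _; rewrite mulgA.
Qed.

Definition rcoset V (z : G) : set G := (fun u => u * z)%g @` V.

Lemma rcoset_refl V z : is_subgroup V -> rcoset V z z.
Proof. by move=> sV; exists 1%g; [exact: subgroup1 | rewrite mul1g]. Qed.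

Lemma rcosetM V u z : is_subgroup V -> V u -> rcoset V (u * z)%g = rcoset V z.
Proof.
move=> sV Vu; apply/seteqP; split=> _ [t Vt <-].
  by exists (t * u)%g; [exact: subgroupM | rewrite mulgA].
exists (t * u^-1)%g; first by apply: subgroupM => //; apply: subgroupV.
by rewrite mulgA mulgVK.
Qed.

Lemma sum_Hmod_rcoset V y r : is_subgroup V -> Hmod V y -> \sum_(z \in rcoset V r) y z = 0.
Proof.
move=> sV [_ Vy]; rewrite fsbig_image ?Vy // => a b _ _; exact: mulIg.
Qed.

(* The sum splits along the right cosets [V r]; on each of them [psi] is
   constant and [y] sums to [0]. *)
Lemma Hmod_pairing_invariant V T y psi :
  is_subgroup V -> Hmod V y -> finite_set T -> (forall z, ~ T z -> y z = 0) ->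
  (forall u z, V u -> psi (u * z)%g = psi z) ->
  \sum_(z \in T) y z * psi z = 0.
Proof.
move=> sV Hy finT yT psiV.
rewrite (fsbig_fibers _ (rcoset V) _ finT) fsbig1 // => _ [r Tr <-].
have fiber z : rcoset V z = rcoset V r -> exists2 u, V u & z = (u * r)%g.
  by move=> zr; have := rcoset_refl z sV; rewrite zr => -[u Vu <-]; exists u.
transitivity (\sum_(z \in T `&` rcoset V @^-1` [set rcoset V r]) y z * psi r).
  by apply: eq_fsbigr => z /[!inE] -[_ /fiber[u Vu ->]]; rewrite psiV.
rewrite -mulr_fsuml (_ : \sum_(z \in _) y z = \sum_(z \in rcoset V r) y z).
  by rewrite sum_Hmod_rcoset ?mul0r.
apply: fsbig_widen => [z [_ /fiber[u Vu ->]] | z [rz /not_andP[/yT //|]]].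
  by exists u.
by case: rz => u Vu <-; rewrite /= rcosetM.
Qed.

End HmodTheory.

Section ImHTheory.
Variables (G : groupType) (P : set (set G)) (V : set G).
Local Open Scope ring_scope.

Lemma ImH0 : ImH P V (fun=> 0).
Proof. by exists 0%N, (fun=> set0), (fun=> fun=> 0); split=> [[] //|g]; rewrite big_ord0. Qed.

Lemma ImH_Hmod W y : P W -> W `<` V -> Hmod W y -> ImH P V y.
Proof. by move=> PW WV Wy; exists 1%N, (fun=> W), (fun=> y); split=> // g; rewrite big_ord1. Qed.

Lemma ImHD y1 y2 : ImH P V y1 -> ImH P V y2 -> ImH P V (fun z => y1 z + y2 z).
Proof.
move=> [n1 [W1 [z1 [H1 E1]]]] [n2 [W2 [z2 [H2 E2]]]].
pose W k := match @fintype.split n1 n2 k with inl i => W1 i | inr j => W2 j end.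
pose z k := match @fintype.split n1 n2 k with inl i => z1 i | inr j => z2 j end.
have splitl i : fintype.split (lshift n2 i) = inl i := unsplitK (inl i).
have splitr j : fintype.split (rshift n1 j) = inr j := unsplitK (inr j).
exists (n1 + n2)%N, W, z; split=> [k|g]; first by rewrite /W /z; case: fintype.split.
rewrite big_split_ord E1 E2 /W /z.
by congr (_ + _); apply: eq_bigr => i _; rewrite ?splitl ?splitr.
Qed.

Lemma ImH_fsum (I : choiceType) (S : set I) (f : I -> G -> int) :
  finite_set S -> (forall i, S i -> ImH P V (f i)) ->
  ImH P V (fun z => \sum_(i \in S) f i z).
Proof.
move=> finS Sf; under eq_fun do rewrite fsbig_finite //.
have : forall i, i \in (fset_set S : seq _) -> ImH P V (f i).
  by move=> i; rewrite in_fset_set // inE => /Sf.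
elim: (fset_set S : seq _) => [_|i s IH si].
  by under eq_fun do rewrite big_nil; exact: ImH0.
under eq_fun do rewrite big_cons; apply: ImHD; first by apply: si; rewrite mem_head.
by apply: IH => j js; apply: si; rewrite in_cons js orbT.
Qed.

End ImHTheory.

Section Amalgamation.
Variables (G : groupType) (J : set (set G)) (V0 : set G).
Hypotheses (finJ : finite_set J) (sJ : forall V, J V -> is_subgroup V).
Hypothesis maxV0 : maximals J V0.
Local Notation A := (\bigcap_(V in maximals J) V).
Local Notation K := (gen_subgroup (\bigcup_(V in maximals J) V)).
Hypothesis amal : is_amalgamated_product K (maximals J) A.
Local Open Scope ring_scope.

Definition sum_below (x : set G -> G -> int) (z : G) : int :=
  \sum_(W \in J `&` [set W | W `<=` V0]) x W z.

Lemma sum_below_decomposition x z :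
  x V0 z = sum_below x z + \sum_(W \in J `&` [set W | W `<` V0]) - x W z.
Proof.
have JV0 : (J `&` [set W | W `<=` V0]) V0 by split=> //; case: maxV0.
rewrite fsumrN /sum_below (fsbigD1 V0) //=; last exact: finite_setIl.
suff -> : (J `&` [set W | W `<=` V0]) `\ V0 = J `&` [set W | W `<` V0] by rewrite addrK.
apply/seteqP; split=> W /=.
  by move=> [[JW WV0] /eqP nWV0]; split; rewrite // properEneq.
by rewrite properEneq => -[JW [/eqP nWV0 WV0]].
Qed.

Lemma exists_potential : exists h : G -> int,
  (forall V v z, maximals J V -> V <> V0 -> V v -> h (v * z)%g = h z) /\
  (forall v z, V0 v -> h (v * z)%g - \1_A (v * z)%g = h z - \1_A z).
Proof.
have sM V : maximals J V -> is_subgroup V by case=> /sJ.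
have sA : is_subgroup A := subgroup_bigcap sM.
have sK : is_subgroup K := subgroup_gen_subgroup _.
have MK V : maximals J V -> V `<=` K by move=> MV v Vv; apply: sub_gen_subgroup; exists V.
have indicM a z : A a -> \1_A (a * z)%g = \1_A z :> int.
  by move=> Aa; rewrite !indicE /in_mem /= /in_set (subgroupMl _ sA Aa).
have indic_outK z : ~ K z -> \1_A z = 0 :> int.
  by move=> Kz; rewrite indicE memNset // => Az; apply: Kz (MK V0 maxV0 z (Az V0 maxV0)).
pose c V v z : int := if `[< V = V0 >] then \1_A (v * z)%g - \1_A z else 0.
have c_cocycle V a b z : c V (a * b)%g z = c V a (b * z)%g + c V b z.
  by rewrite /c mulgA; case: ifP => _; [rewrite addrA subrK | rewrite addr0].
have c_on_A V W a : A a -> c V a = c W a.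
  by move=> Aa; apply: funext => z; rewrite /c indicM // subrr; do 2!case: ifP.
have [h hc] := amalgamated_coboundary amal (fun V a b z _ _ _ => c_cocycle V a b z)
  (fun V W a _ _ => c_on_A V W a).
exists (fun z => if `[< K z >] then h z else 0); split=> [V v z MV nV Vv | v z Vv].
  have Kv := MK V MV v Vv.
  have [Kz | Kz] := pselect (K z); last by rewrite !asboolF // (subgroupMl _ sK Kv).
  rewrite !asboolT ?(subgroupMl _ sK Kv) // (hc V) //.
  by rewrite /c asboolF ?addr0.
have Kv := MK V0 maxV0 v Vv.
have [Kz | Kz] := pselect (K z).
  rewrite !asboolT ?(subgroupMl _ sK Kv) // (hc V0) //.
  by rewrite /c asboolT // addrA addrAC addrK.
by rewrite !asboolF ?indic_outK ?(subgroupMl _ sK Kv).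
Qed.

Section Pairing.
Variable x : set G -> G -> int.
Hypothesis Hx : forall V, J V -> Hmod V (x V).
Hypothesis Hsum : forall g, \sum_(V \in J) x V g = 0.

Let T := \bigcup_(W in J) [set z | x W z != 0].

Let finT : finite_set T.
Proof. by apply: bigcup_finite => // W /Hx[]. Qed.

Let x_outT W : J W -> forall z, ~ T z -> x W z = 0.
Proof. by move=> JW z; apply: contra_notP => xz; exists W => //=; apply/eqP. Qed.

Let pairing_invariant W (psi : G -> int) :
  J W -> (forall u z, W u -> psi (u * z)%g = psi z) -> \sum_(z \in T) x W z * psi z = 0.
Proof. by move=> JW; apply: Hmod_pairing_invariant (sJ JW) (Hx JW) finT (x_outT JW). Qed.

Lemma sum_below_bigcap_eq0 : \sum_(a \in A) sum_below x a = 0.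
Proof.
have [h [h_inv h_invV0]] := exists_potential.
have finJb : finite_set (J `&` [set W | W `<=` V0]) by exact: finite_setIl.
have below_pairing W : J W -> W `<=` V0 ->
    \sum_(z \in T) x W z * \1_A z = \sum_(z \in T) x W z * h z.
  move=> JW WV0; apply/esym/subr0_eq.
  rewrite -fsumrN -fsbig_split // -[RHS](pairing_invariant (psi := fun z => h z - \1_A z) JW).
    by apply: eq_fsbigr => z _; rewrite mulrBr.
  by move=> u z Wu; apply: h_invV0; apply: WV0.
have not_below_pairing W : J W -> ~ W `<=` V0 -> \sum_(z \in T) x W z * h z = 0.
  move=> JW WV0; have [V MV WV] := exists_maximal finJ JW.
  apply: pairing_invariant JW _ => u z Wu; apply: h_inv MV _ (WV u Wu).
  by move=> VV0; apply: WV0; rewrite -VV0.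
transitivity (\sum_(z \in T `&` A) sum_below x z).
  apply/esym/fsbig_widen => [z [] // | z [Az TAz]].
  have Tz : ~ T z by move=> Tz; apply: TAz.
  by apply: fsbig1 => W [JW _]; rewrite x_outT.
transitivity (\sum_(z \in T) sum_below x z * \1_A z).
  rewrite fsbig_mkcondr; apply: eq_fsbigr => z _.
  by rewrite indicE; case: (z \in A); rewrite ?mulr1 ?mulr0.
under eq_fsbigr do rewrite /sum_below mulr_fsuml.
rewrite exchange_fsbig //.
under eq_fsbigr => W /[!inE] -[JW WV0] do rewrite below_pairing //.
transitivity (\sum_(W \in J) \sum_(z \in T) x W z * h z).
  rewrite [RHS](fsbigID [set W | W `<=` V0]) //= [X in _ + X]fsbig1 ?addr0 // => W [JW].
  exact: not_below_pairing.
rewrite exchange_fsbig // fsbig1 // => z _.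
by rewrite -mulr_fsuml Hsum mul0r.
Qed.

End Pairing.

Lemma Hmod_sum_below x : (forall V, J V -> Hmod V (x V)) ->
  (forall g, \sum_(V \in J) x V g = 0) -> Hmod A (sum_below x).
Proof.
move=> Hx Hsum; split=> [|g].
  have finT := bigcup_finite (F := fun W => [set z | x W z != 0]) finJ (fun W JW => (Hx W JW).1).
  apply: sub_finite_set finT => z /= /(fsbigN1 (f := fun z W => x W z))[W [JW _] xWz].
  by exists W.
apply: (@sum_below_bigcap_eq0 (fun W z => x W (z * g)%g)) => [V JV | z].
  exact: Hmod_translate g (Hx V JV).
exact: Hsum.
Qed.

Lemma sum_below_of_bigcap_eq x z : A = V0 -> sum_below x z = \sum_(W \in J) x W z.
Proof.
move=> AV0; rewrite /sum_below setIidl // => W JW.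
have [V MV WV] := exists_maximal finJ JW.
suff <- : V = V0 by [].
by apply: maxV0.2 MV.1 _; rewrite -AV0 => a /(_ V MV).
Qed.

End Amalgamation.

Theorem proposition4p1 (G : groupType) (P : set (set G)) (U : set G) :
  (forall V, P V -> is_subgroup V) ->
  P [set 1%g] ->
  colimit_cone P ->
  P U ->
  (forall J : set (set G), finite_set J -> J `<=` below P U -> J !=set0 ->
     is_amalgamated_product (gen_subgroup (\bigcup_(V in maximals J) V))
       (maximals J) (\bigcap_(V in maximals J) V) /\
     P (\bigcap_(V in maximals J) V)) ->
  pseudo_projective P U.
Proof.
move=> sP _ _ _ hamal J x finJ JP Hx Hsum V0 maxV0.
have [amal PA] := hamal J finJ JP (ex_intro _ V0 maxV0.1).
have sJ V : J V -> is_subgroup V by move=> /JP[/sP].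
set A := \bigcap_(V in maximals J) V in amal PA *.
have strict_below :
    ImH P V0 (fun z => \sum_(W \in J `&` [set W | W `<` V0]) - x W z)%R.
  apply: ImH_fsum => [|W [JW WV0]]; first exact: finite_setIl.
  exact: ImH_Hmod (JP W JW).1 WV0 (Hmod_opp (Hx W JW)).
rewrite (funext (sum_below_decomposition finJ maxV0 x)).
have [AV0 | AV0] := pselect (A = V0).
  by under eq_fun do rewrite sum_below_of_bigcap_eq // Hsum add0r.
apply: ImHD strict_below; apply: ImH_Hmod PA _ (Hmod_sum_below finJ sJ maxV0 amal Hx Hsum).
by rewrite properEneq; split=> [|a]; [apply/eqP | apply; exact: maxV0].
Qed.
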